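(* Let $p\in\mathcal{X}$. Then there exists a pathless polynomial $q\in\mathcal{X}$ such that $p\equiv q \pmod{\mathcal{J}}$.
   Context: Let $\mathbf{k}$ be a commutative ring, let $\beta,\alpha\in\mathbf{k}$, and let $n$ be a positive integer; write $[m]=\{1,2,\dots,m\}$. Let $\mathcal{X}=\mathbf{k}[x_{i,j}\mid 1\le i<j\le n]$ be the polynomial ring over $\mathbf{k}$ in the $n(n-1)/2$ indeterminates $x_{i,j}$, and let $\mathfrak{M}$ be the set of monomials (without coefficients) in these indeterminates. Let $\mathcal{J}$ be the ideal of $\mathcal{X}$ generated by all elements $x_{i,j}x_{j,k}-x_{i,k}(x_{i,j}+x_{j,k}+\beta)-\alpha$ for $1\le i<j<k\le n$. A monomial $\mathfrak{m}\in\mathfrak{M}$ is pathless if there is no triple $(i,j,k)$ with $1\le i<j<k\le n$ and $x_{i,j}x_{j,k}\mid\mathfrak{m}$. A polynomial in $\mathcal{X}$ is pathless if it is a $\mathbf{k}$-linear combination of pathless monomials. *)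

From HB Require Import structures.
From mathcomp Require Import all_boot all_order all_algebra.
Set Implicit Arguments. Unset Strict Implicit. Unset Printing Implicit Defensive.
Import GRing.Theory.
Local Open Scope ring_scope.

(* A variable x_{i,j} is the pair (i,j); it is a variable of X iff 1 <= i < j <= n. *)
Definition var := (nat * nat)%type.
Definition valid_var (n : nat) (v : var) : bool := [&& 0 < v.1, v.1 < v.2 & v.2 <= n]%N.

(* A monomial is a finite multiset of variables, represented by a sequence
   (two sequences denote the same monomial iff they are permutations). *)
Definition monomial := seq var.

Definition mpoly (k : comPzRingType) := seq (k * monomial)%type.

Definition valid_poly (k : comPzRingType) (n : nat) (p : mpoly k) : bool :=
  all (fun t => all (valid_var n) t.2) p.

(* Coefficient of the monomial m in p: two representations denote the same
   polynomial iff all coefficients agree. *)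
Definition coef (k : comPzRingType) (p : mpoly k) (m : monomial) : k :=
  \sum_(t <- p | perm_eq t.2 m) t.1.

Definition pmul (k : comPzRingType) (p q : mpoly k) : mpoly k :=
  [seq (a.1 * b.1, a.2 ++ b.2) | a <- p, b <- q].

Definition valid_triple (n : nat) (t : nat * nat * nat) : bool :=
  [&& 0 < t.1.1, t.1.1 < t.1.2, t.1.2 < t.2 & t.2 <= n]%N.

Definition genJ (k : comPzRingType) (beta alpha : k) (t : nat * nat * nat) : mpoly k :=
  let: (i, j, l) := t in
  [:: (1, [:: (i, j); (j, l)]);
      (-1, [:: (i, l); (i, j)]);
      (-1, [:: (i, l); (j, l)]);
      (- beta, [:: (i, l)]);
      (- alpha, [::])].

Definition congJ (k : comPzRingType) (n : nat) (beta alpha : k) (p q : mpoly k) : Prop :=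
  exists s : seq (mpoly k * (nat * nat * nat)),
    all (fun t => valid_poly n t.1) s /\ all (fun t => valid_triple n t.2) s /\
    forall m : monomial,
      coef p m = coef q m + coef (flatten [seq pmul t.1 (genJ beta alpha t.2) | t <- s]) m.

Definition pathless_mono (n : nat) (m : monomial) : Prop :=
  forall i j l : nat, (0 < i)%N -> (i < j)%N -> (j < l)%N -> (l <= n)%N ->
    ~ ((i, j) \in m /\ (j, l) \in m).

Definition pathless (k : comPzRingType) (n : nat) (q : mpoly k) : Prop :=
  forall t, t \in q -> pathless_mono n t.2.

(* Rewriting x_{i,j} x_{j,l} to x_{i,l} (x_{i,j} + x_{j,l} + beta) + alpha modulo J
   replaces a path by terms in which the long variable x_{i,l} takes the place of
   one of the short ones. Weighing each variable x_{i,j} by n - (j - i), every term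
   produced has smaller weight than the monomial rewritten, so repeated rewriting
   of terms that are not pathless terminates, leaving a pathless polynomial. *)
From mathcomp Require Import all_boot all_order all_algebra.
From mathcomp Require Import ring zify.
From Stdlib Require Import Classical.
Set Implicit Arguments. Unset Strict Implicit. Unset Printing Implicit Defensive.
Import GRing.Theory.
Local Open Scope ring_scope.

Section PathlessReduction.
Variables (k : comPzRingType) (beta alpha : k) (n : nat).

Lemma coef_cat (p q : mpoly k) m : coef (p ++ q) m = coef p m + coef q m.
Proof. by rewrite /coef big_cat. Qed.

Lemma congJ_refl (p : mpoly k) : congJ n beta alpha p p.
Proof. by exists [::]; do 2!split => //; move=> m; rewrite /coef big_nil addr0. Qed.

Lemma congJ_cat (p1 q1 p2 q2 : mpoly k) :
  congJ n beta alpha p1 q1 -> congJ n beta alpha p2 q2 ->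
  congJ n beta alpha (p1 ++ p2) (q1 ++ q2).
Proof.
move=> [s1 [v1 [t1 e1]]] [s2 [v2 [t2 e2]]].
exists (s1 ++ s2); rewrite !all_cat v1 v2 t1 t2; do 2!split => //.
move=> m; rewrite map_cat flatten_cat !coef_cat e1 e2.
by rewrite -!addrA; congr (_ + _); rewrite addrCA.
Qed.

Lemma congJ_trans (p q r : mpoly k) :
  congJ n beta alpha p q -> congJ n beta alpha q r -> congJ n beta alpha p r.
Proof.
move=> [s1 [v1 [t1 e1]]] [s2 [v2 [t2 e2]]].
exists (s2 ++ s1); rewrite !all_cat v1 v2 t1 t2; do 2!split => //.
by move=> m; rewrite map_cat flatten_cat !coef_cat e1 e2 addrA.
Qed.

Definition pathless_reducible (p : mpoly k) : Prop :=
  exists q, valid_poly n q /\ pathless n q /\ congJ n beta alpha p q.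

Lemma pathless_reducible_cat (p1 p2 : mpoly k) :
  pathless_reducible p1 -> pathless_reducible p2 -> pathless_reducible (p1 ++ p2).
Proof.
move=> [q1 [v1 [l1 c1]]] [q2 [v2 [l2 c2]]].
exists (q1 ++ q2); split; first by rewrite /valid_poly all_cat -!/(valid_poly n _) v1 v2.
split; first by move=> t; rewrite mem_cat => /orP [/l1|/l2].
exact: congJ_cat.
Qed.

Lemma pathless_reducible_terms (p : mpoly k) :
  (forall t, t \in p -> pathless_reducible [:: t]) -> pathless_reducible p.
Proof.
elim: p => [_|t p IH red_tp].
  by exists [::]; do 2!split => //; exact: congJ_refl.
apply: (@pathless_reducible_cat [:: t]); first exact/red_tp/mem_head.
by apply: IH => u pu; apply: red_tp; rewrite inE pu orbT.
Qed.

Lemma pathless_reducible_congJ (p q : mpoly k) :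
  congJ n beta alpha p q -> pathless_reducible q -> pathless_reducible p.
Proof. by move=> cpq [r [vr [lr cqr]]]; exists r; do 2!split => //; exact: congJ_trans cqr. Qed.

Lemma pathless_reducible_pathless_term (c : k) (m : monomial) :
  all (valid_var n) m -> pathless_mono n m -> pathless_reducible [:: (c, m)].
Proof.
move=> vm lm; exists [:: (c, m)]; split; first by rewrite /valid_poly /= vm.
by split; [move=> t; rewrite inE => /eqP -> | exact: congJ_refl].
Qed.

Lemma exists_path_factor (m : monomial) : ~ pathless_mono n m ->
  exists i j l rest, valid_triple n (i, j, l) /\ perm_eq m [:: (i, j), (j, l) & rest].
Proof.
move=> not_lm; apply: NNPP => no_factor; apply: not_lm.
move=> i j l i_gt0 lt_ij lt_jl le_ln [ij_m jl_m]; apply: no_factor.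
have jl_rem : (j, l) \in rem (i, j) m.
  move: jl_m; rewrite (perm_mem (perm_to_rem ij_m)) inE => /orP [/eqP [ji _]|//].
  by rewrite ji ltnn in lt_ij.
exists i, j, l, (rem (j, l) (rem (i, j) m)); split.
  by rewrite /valid_triple /= i_gt0 lt_ij lt_jl le_ln.
by apply: perm_trans (perm_to_rem ij_m) _; rewrite perm_cons perm_to_rem.
Qed.

Definition mono_weight (m : monomial) : nat := sumn [seq (n - (v.2 - v.1))%N | v <- m].

Lemma mono_weight_cat (m1 m2 : monomial) :
  mono_weight (m1 ++ m2) = (mono_weight m1 + mono_weight m2)%N.
Proof. by rewrite /mono_weight map_cat sumn_cat. Qed.

Lemma mono_weight_perm (m1 m2 : monomial) :
  perm_eq m1 m2 -> mono_weight m1 = mono_weight m2.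
Proof. by move=> pm; apply/perm_sumn/perm_map. Qed.

Definition path_reduct (c : k) (rest : monomial) (i j l : nat) : mpoly k :=
  [:: (c, rest ++ [:: (i, l); (i, j)]); (c, rest ++ [:: (i, l); (j, l)]);
      (c * beta, rest ++ [:: (i, l)]); (c * alpha, rest)].

Lemma congJ_path_reduct (c : k) (m rest : monomial) (i j l : nat) :
  all (valid_var n) rest -> valid_triple n (i, j, l) ->
  perm_eq m [:: (i, j), (j, l) & rest] ->
  congJ n beta alpha [:: (c, m)] (path_reduct c rest i j l).
Proof.
move=> v_rest v_ijl pm.
exists [:: ([:: (c, rest)], (i, j, l))]; rewrite /= /valid_poly /= v_rest v_ijl.
split=> //; split=> // m'; rewrite /coef /= !big_cons big_nil cats0 /=.
have -> : perm_eq (rest ++ [:: (i, j); (j, l)]) m' = perm_eq m m'.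
  by apply: permPl; rewrite perm_sym (perm_trans pm) // (perm_catC [:: _; _]).
case: (perm_eq m m'); case: (perm_eq (rest ++ [:: (i, l); (i, j)]) m');
case: (perm_eq (rest ++ [:: (i, l); (j, l)]) m');
case: (perm_eq (rest ++ [:: (i, l)]) m'); case: (perm_eq rest m'); ring.
Qed.

Lemma path_reduct_valid (c : k) (rest : monomial) (i j l : nat) :
  all (valid_var n) rest -> valid_triple n (i, j, l) ->
  valid_poly n (path_reduct c rest i j l).
Proof.
move=> v_rest; rewrite /valid_triple /valid_poly /= !all_cat v_rest /= /valid_var /=.
lia.
Qed.

Lemma mono_weight_path_reduct (c : k) (m rest : monomial) (i j l : nat) :
  valid_triple n (i, j, l) -> perm_eq m [:: (i, j), (j, l) & rest] ->
  all (fun t => mono_weight t.2 < mono_weight m)%N (path_reduct c rest i j l).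
Proof.
move=> v_ijl pm; rewrite (mono_weight_perm pm) /= !mono_weight_cat /mono_weight /=.
move: v_ijl; rewrite /valid_triple /=; lia.
Qed.

Lemma pathless_reducible_term (c : k) (m : monomial) :
  all (valid_var n) m -> pathless_reducible [:: (c, m)].
Proof.
have [N] := ubnP (mono_weight m); elim: N c m => // N IH c m /ltnSE wm vm.
have [lm | /exists_path_factor [i [j [l [rest [v_ijl pm]]]]]] :=
  classic (pathless_mono n m); first exact: pathless_reducible_pathless_term.
have v_rest : all (valid_var n) rest by move: vm; rewrite (perm_all _ pm) => /and3P [].
apply: pathless_reducible_congJ (congJ_path_reduct c v_rest v_ijl pm) _.
apply: pathless_reducible_terms => -[c' m'] t_red.
apply: IH; last exact: allP (path_reduct_valid c v_rest v_ijl) _ t_red.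
exact: leq_trans (allP (mono_weight_path_reduct c v_ijl pm) _ t_red) wm.
Qed.

End PathlessReduction.

Theorem proposition2p5 (k : comPzRingType) (beta alpha : k) (n : nat)
  (hn : (0 < n)%N) (p : mpoly k) (hp : valid_poly n p) :
  exists q : mpoly k, valid_poly n q /\ pathless n q /\ congJ n beta alpha p q.
Proof.
apply: pathless_reducible_terms => -[c m] /(allP hp) vm.
exact: pathless_reducible_term.
Qed.
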